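(* Let $X$ be a complete CAT(0) space and $T_n:X\to X$ for $n\in\mathbb{N}$, with $F:=\bigcap_{n\in\mathbb{N}}Fix(T_n)\neq\emptyset$. Let $\varphi:[0,\infty)\to[0,\infty)$ be an increasing function vanishing only at $0$, and $(\gamma_n)$ a sequence in $(0,\infty)$ with $\sum_{n=0}^\infty\gamma_n^2=\infty$ having rate of divergence $\theta$. Let $b\in\mathbb{N}$, $p\in F$, and $C$ the closed ball of center $p$ and radius $b$. Assume that for all $n$, $T_n$ is uniformly $(P_2)$ on $C$ with modulus $\gamma_n\varphi$. For $x\in C$ let $x_0:=x$, $x_{n+1}:=T_nx_n$, and suppose the sequence $\left(\frac{d(x_n,x_{n+1})}{\gamma_n}\right)$ is nonincreasing. Then $C\cap F=\{p\}$ and $(x_n)$ converges strongly to $p$ with rate of convergence $$\Psi_{b,\theta,\varphi}(k):=\Sigma_{b,\theta}\left(\left\lceil\frac{2b}{\varphi\left(\frac1{k+1}\right)}\right\rceil\right)+1,\qquad \Sigma_{b,\theta}(k):=\theta(b^2(k+1)^2).$$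
   Context: A geodesic space $(X,d)$ is CAT(0) if for all $z\in X$, all geodesics $\gamma:[a,b]\to X$ and all $t\in[0,1]$, $d^2(z,\gamma((1-t)a+tb))\le(1-t)d^2(z,\gamma(a))+td^2(z,\gamma(b))-t(1-t)d^2(\gamma(a),\gamma(b))$. $T$ is uniformly $(P_2)$ on $C$ with modulus $\phi$ if $T(C)\subseteq C$ and for all $x,y\in C$: $2d^2(Tx,Ty)\le d^2(x,Ty)+d^2(y,Tx)-d^2(x,Tx)-d^2(y,Ty)-2\phi(d(Tx,Ty))$. A rate of divergence for $\sum\gamma_n^2=\infty$ is $\theta:\mathbb{N}\to\mathbb{N}$ with $\sum_{n=0}^{\theta(K)}\gamma_n^2\ge K$ for all $K\in\mathbb{N}$. A rate of convergence of $a_n\to a$ is $\Phi:\mathbb{N}\to\mathbb{N}$ with $d(a_n,a)\le\frac1{k+1}$ for all $k$ and all $n\ge\Phi(k)$. $Fix(T)$ is the fixed point set. *)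

From Stdlib Require Export Reals Lra ZArith.
Open Scope R_scope.

Section MetricDefs.
Variable X : Type.
Variable d : X -> X -> R.

Definition is_metric : Prop :=
  (forall x y, 0 <= d x y) /\
  (forall x y, d x y = 0 <-> x = y) /\
  (forall x y, d x y = d y x) /\
  (forall x y z, d x z <= d x y + d y z).

Definition is_geodesic (g : R -> X) (a b : R) : Prop :=
  a <= b /\
  forall s t, a <= s <= b -> a <= t <= b -> d (g s) (g t) = Rabs (s - t).

Definition geodesic_space : Prop :=
  forall x y, exists g : R -> X,
    is_geodesic g 0 (d x y) /\ g 0 = x /\ g (d x y) = y.

Definition CAT0 : Prop :=
  is_metric /\ geodesic_space /\
  forall (z : X) (g : R -> X) (a b : R), is_geodesic g a b ->
  forall t, 0 <= t <= 1 ->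
    (d z (g ((1 - t) * a + t * b))) ^ 2 <=
      (1 - t) * (d z (g a)) ^ 2 + t * (d z (g b)) ^ 2
      - t * (1 - t) * (d (g a) (g b)) ^ 2.

Definition cauchy_seq (u : nat -> X) : Prop :=
  forall eps, 0 < eps -> exists N, forall m n, (N <= m)%nat -> (N <= n)%nat ->
    d (u m) (u n) < eps.

Definition seq_converges_to (u : nat -> X) (l : X) : Prop :=
  forall eps, 0 < eps -> exists N, forall n, (N <= n)%nat -> d (u n) l < eps.

Definition complete : Prop :=
  forall u, cauchy_seq u -> exists l, seq_converges_to u l.

Definition uniformly_P2 (T : X -> X) (C : X -> Prop) (phi : R -> R) : Prop :=
  (forall x, C x -> C (T x)) /\
  forall x y, C x -> C y ->
    2 * (d (T x) (T y)) ^ 2 <=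
      (d x (T y)) ^ 2 + (d y (T x)) ^ 2 - (d x (T x)) ^ 2 - (d y (T y)) ^ 2
      - 2 * phi (d (T x) (T y)).

Definition closed_ball (p : X) (r : R) : X -> Prop := fun y => d p y <= r.

Definition rate_of_convergence (u : nat -> X) (a : X) (Phi : nat -> nat) : Prop :=
  forall k n, (Phi k <= n)%nat -> d (u n) a <= 1 / (INR k + 1).
End MetricDefs.

Fixpoint iter_seq {X : Type} (T : nat -> X -> X) (x : X) (n : nat) : X :=
  match n with
  | O => x
  | S m => T m (iter_seq T x m)
  end.

Definition rate_of_divergence (gamma : nat -> R) (theta : nat -> nat) : Prop :=
  forall K : nat, sum_f_R0 (fun n => (gamma n) ^ 2) (theta K) >= INR K.

(* ceiling of a real number, as a natural number (for nonnegative arguments) *)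
Definition nat_ceil (x : R) : nat := Z.to_nat (- (up (- x) - 1))%Z.

Definition Sigma_rate (b : nat) (theta : nat -> nat) (k : nat) : nat :=
  theta (Nat.mul (Nat.pow b 2) (Nat.pow (S k) 2)).

Definition Psi_rate (b : nat) (theta : nat -> nat) (phi : R -> R) (k : nat) : nat :=
  S (Sigma_rate b theta (nat_ceil (2 * INR b / phi (1 / (INR k + 1))))).

From Stdlib Require Import Reals Lra Lia ZArith.
Open Scope R_scope.

(* Testing the (P_2) inequality of T_n against the common fixed point p gives the
   descent  a_{n+1}^2 <= a_n^2 - D_n^2 - 2 gamma_n phi(a_{n+1})  for
   a_n := d(x_n, p) and D_n := d(x_n, x_{n+1}); for a fixed point y this forces
   phi(d(y, p)) = 0, i.e. y = p.  Telescoping bounds sum_{j<=N} D_j^2 by b^2, and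
   since c_n := D_n / gamma_n is nonincreasing, c_N^2 sum_{j<=N} gamma_j^2 <= b^2:
   the rate of divergence theta makes c_N small.  The descent together with the
   triangle inequality a_n <= D_n + a_{n+1} yields phi(a_{N+1}) <= b c_N, and
   the monotonicity of phi and of (a_n) turns this into the rate Psi. *)

Lemma nat_ceil_ge (x : R) : x <= INR (nat_ceil x).
Proof.
  unfold nat_ceil.
  destruct (archimed (- x)) as [_ Hup].
  set (z := (- (up (- x) - 1))%Z).
  assert (Hz : x <= IZR z) by (unfold z; rewrite opp_IZR, minus_IZR; simpl; lra).
  destruct (Z_lt_le_dec z 0) as [Hneg | Hnonneg].
  - replace (Z.to_nat z) with 0%nat by (clearbody z; destruct z; simpl; lia).
    apply IZR_lt in Hneg. simpl. lra.
  - rewrite INR_IZR_INZ, Z2Nat.id by lia. exact Hz.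
Qed.

Lemma rate_of_convergence_converges (X : Type) (d : X -> X -> R)
  (u : nat -> X) (l : X) (Phi : nat -> nat) :
  rate_of_convergence X d u l Phi -> seq_converges_to X d u l.
Proof.
  intros Hrate eps Heps.
  destruct (archimed_cor1 eps Heps) as [k [Hk Hkpos]].
  exists (Phi k). intros n Hn.
  apply (Rle_lt_trans _ _ _ (Hrate k n Hn)).
  apply (Rle_lt_trans _ (/ INR k)); [|exact Hk].
  assert (0 < INR k) by (apply lt_0_INR; exact Hkpos).
  unfold Rdiv. rewrite Rmult_1_l. apply Rinv_le_contravar; lra.
Qed.

Section P2Maps.

Variables (X : Type) (d : X -> X -> R).
Hypothesis d_metric : is_metric X d.

Lemma closed_ball_center (p : X) (r : R) : 0 <= r -> closed_ball X d p r p.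
Proof.
  destruct d_metric as [_ [Hdeq _]].
  intro Hr. unfold closed_ball. rewrite (proj2 (Hdeq p p) eq_refl). exact Hr.
Qed.

Lemma iter_seq_in (C : X -> Prop) (T : nat -> X -> X) (x : X) :
  (forall n y, C y -> C (T n y)) -> C x -> forall n, C (iter_seq T x n).
Proof. intros HT Hx n. induction n as [|n IH]; [exact Hx | exact (HT n _ IH)]. Qed.

Variables (T : X -> X) (C : X -> Prop) (psi : R -> R) (p : X).
Hypotheses (T_P2 : uniformly_P2 X d T C psi) (p_in_C : C p) (p_fixed : T p = p).

Lemma P2_fixed_point_descent (y : X) : C y ->
  d (T y) p ^ 2 <= d y p ^ 2 - d y (T y) ^ 2 - 2 * psi (d (T y) p).
Proof.
  destruct d_metric as [_ [Hdeq [Hsym _]]].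
  intro Hy.
  pose proof (proj2 T_P2 y p Hy p_in_C) as HP2.
  rewrite p_fixed, (proj2 (Hdeq p p) eq_refl), (Hsym p (T y)) in HP2.
  lra.
Qed.

Lemma P2_fixed_point_unique (y : X) :
  (forall t, 0 <= t -> psi t <= 0 -> t = 0) -> C y -> T y = y -> y = p.
Proof.
  destruct d_metric as [Hd0 [Hdeq _]].
  intros Hpsi Hy Hfix.
  pose proof (P2_fixed_point_descent y Hy) as Hdesc.
  rewrite Hfix, (proj2 (Hdeq y y) eq_refl) in Hdesc.
  apply Hdeq, Hpsi; [apply Hd0 | lra].
Qed.

End P2Maps.

Section Descent.

Variables (a D gamma : nat -> R) (phi : R -> R) (B : R).
Hypotheses (a_nonneg : forall n, 0 <= a n) (a_le : forall n, a n <= B)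
  (D_nonneg : forall n, 0 <= D n) (gamma_pos : forall n, 0 < gamma n)
  (phi_nonneg : forall t, 0 <= t -> 0 <= phi t)
  (phi_incr : forall s t, 0 <= s -> s <= t -> phi s <= phi t).
Hypothesis descent :
  forall n, a (S n) ^ 2 <= a n ^ 2 - D n ^ 2 - 2 * (gamma n * phi (a (S n))).
Hypothesis triangle : forall n, a n <= D n + a (S n).
Hypothesis speed_succ_le : forall n, D (S n) / gamma (S n) <= D n / gamma n.

Let c n := D n / gamma n.

Lemma descent_penalty_nonneg n : 0 <= gamma n * phi (a (S n)).
Proof. apply Rmult_le_pos; [apply Rlt_le, gamma_pos | apply phi_nonneg, a_nonneg]. Qed.

Lemma a_succ_le n : a (S n) <= a n.
Proof.
  pose proof (descent n). pose proof (descent_penalty_nonneg n).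
  pose proof (a_nonneg n). pose proof (a_nonneg (S n)).
  nra.
Qed.

Lemma a_antitone n m : (n <= m)%nat -> a m <= a n.
Proof.
  induction 1 as [|m _ IH]; [lra|].
  pose proof (a_succ_le m). lra.
Qed.

Lemma speed_antitone j N : (j <= N)%nat -> c N <= c j.
Proof.
  induction 1 as [|N _ IH]; [lra|].
  pose proof (speed_succ_le N). unfold c in *. lra.
Qed.

Lemma speed_nonneg n : 0 <= c n.
Proof. apply Rle_mult_inv_pos; [apply D_nonneg | apply gamma_pos]. Qed.

Lemma sum_sq_steps_le N : sum_f_R0 (fun j => D j ^ 2) N <= a 0%nat ^ 2 - a (S N) ^ 2.
Proof.
  induction N as [|N IH].
  - pose proof (descent 0%nat). pose proof (descent_penalty_nonneg 0%nat). simpl sum_f_R0. lra.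
  - change (sum_f_R0 (fun j => D j ^ 2) (S N))
      with (sum_f_R0 (fun j => D j ^ 2) N + D (S N) ^ 2).
    pose proof (descent (S N)). pose proof (descent_penalty_nonneg (S N)). lra.
Qed.

Lemma speed_sq_mul_sum_le N : c N ^ 2 * sum_f_R0 (fun j => gamma j ^ 2) N <= B ^ 2.
Proof.
  rewrite scal_sum.
  apply (Rle_trans _ (sum_f_R0 (fun j => D j ^ 2) N)).
  - apply sum_Rle. intros j Hj.
    replace (D j) with (c j * gamma j)
      by (unfold c; field; apply Rgt_not_eq, gamma_pos).
    assert (c N ^ 2 <= c j ^ 2)
      by (apply pow_incr; split; [apply speed_nonneg | apply speed_antitone, Hj]).
    pose proof (pow2_ge_0 (gamma j)).
    rewrite Rpow_mult_distr. nra.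
  - pose proof (sum_sq_steps_le N). pose proof (pow2_ge_0 (a (S N))).
    assert (a 0%nat ^ 2 <= B ^ 2) by (apply pow_incr; split; [apply a_nonneg | apply a_le]).
    lra.
Qed.

(* 2 gamma_n phi(a_{n+1}) <= a_n^2 - a_{n+1}^2 = (a_n - a_{n+1})(a_n + a_{n+1}) <= D_n * 2B *)
Lemma phi_a_succ_le n : phi (a (S n)) <= B * c n.
Proof.
  pose proof (descent n) as Hdesc. pose proof (triangle n).
  pose proof (a_succ_le n). pose proof (a_nonneg (S n)).
  pose proof (a_le n). pose proof (a_le (S n)). pose proof (gamma_pos n).
  assert (Hsq : 2 * (gamma n * phi (a (S n))) <= (a n - a (S n)) * (a n + a (S n))) by nra.
  assert (Hprod : (a n - a (S n)) * (a n + a (S n)) <= D n * (2 * B))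
    by (apply Rmult_le_compat; lra).
  apply (Rmult_le_reg_l (gamma n)); [lra|].
  replace (gamma n * (B * c n)) with (B * D n)
    by (unfold c; field; apply Rgt_not_eq, gamma_pos).
  lra.
Qed.

Lemma speed_small N (K : R) : 0 < B -> 0 <= K ->
  B ^ 2 * (K + 1) ^ 2 <= sum_f_R0 (fun j => gamma j ^ 2) N -> c N * (K + 1) <= 1.
Proof.
  intros HB HK Hsum.
  pose proof (speed_sq_mul_sum_le N). pose proof (speed_nonneg N).
  assert (HcK : c N ^ 2 * (B ^ 2 * (K + 1) ^ 2) <= B ^ 2).
  { eapply Rle_trans; [|eassumption]. apply Rmult_le_compat_l; [apply pow2_ge_0 | exact Hsum]. }
  assert (0 < B ^ 2) by (apply pow_lt, HB).
  assert ((c N * (K + 1)) ^ 2 <= 1 ^ 2) by nra.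
  nra.
Qed.

Lemma a_succ_lt N (e : R) (M : nat) : 0 <= e -> 0 < phi e ->
  2 * B <= phi e * INR M -> c N * (INR M + 1) <= 1 -> a (S N) < e.
Proof.
  intros He Hphie HM HcN.
  destruct (Rlt_le_dec (a (S N)) e) as [Hlt | Hge]; [exact Hlt | exfalso].
  pose proof (phi_incr _ _ He Hge). pose proof (phi_a_succ_le N).
  pose proof (pos_INR M). pose proof (a_nonneg 0%nat). pose proof (a_le 0%nat).
  assert (phi e * (INR M + 1) <= B * c N * (INR M + 1)) by nra.
  nra.
Qed.

Lemma Psi_rate_bound (theta : nat -> nat) (b : nat) :
  rate_of_divergence gamma theta -> B <= INR b ->
  (forall t, 0 <= t -> phi t = 0 -> t = 0) ->
  forall k n, (Psi_rate b theta phi k <= n)%nat -> a n <= 1 / (INR k + 1).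
Proof.
  intros Htheta Hb Hphi0 k n Hn.
  assert (Hk : 0 < 1 / (INR k + 1)) by (pose proof (pos_INR k); apply Rdiv_lt_0_compat; lra).
  destruct (Rle_lt_dec B 0) as [HB0 | HB].
  { pose proof (a_le n). lra. }
  set (eps := phi (1 / (INR k + 1))).
  assert (Heps : 0 < eps).
  { assert (0 <= eps) by (apply phi_nonneg; lra).
    destruct (Req_dec eps 0) as [He | He]; [|lra].
    apply Hphi0 in He; lra. }
  set (M := nat_ceil (2 * INR b / eps)).
  assert (HM : 2 * B <= eps * INR M).
  { pose proof (nat_ceil_ge (2 * INR b / eps)) as Hceil. fold M in Hceil.
    apply (Rmult_le_compat_l eps) in Hceil; [|lra].
    replace (eps * (2 * INR b / eps)) with (2 * INR b) in Hceil by (field; lra).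
    lra. }
  set (N := theta (Nat.mul (Nat.pow b 2) (Nat.pow (S M) 2))).
  assert (HsumN : B ^ 2 * (INR M + 1) ^ 2 <= sum_f_R0 (fun j => gamma j ^ 2) N).
  { pose proof (Htheta (Nat.mul (Nat.pow b 2) (Nat.pow (S M) 2))) as HN. fold N in HN.
    rewrite mult_INR, !pow_INR, S_INR in HN.
    assert (B ^ 2 <= INR b ^ 2) by (apply pow_incr; lra).
    pose proof (pow2_ge_0 (INR M + 1)).
    nra. }
  pose proof (speed_small N (INR M) HB (pos_INR M) HsumN) as HcN.
  pose proof (a_succ_lt N _ M (Rlt_le _ _ Hk) Heps HM HcN).
  pose proof (a_antitone (S N) n Hn).
  lra.
Qed.

End Descent.

Theorem theorem5p1
  (X : Type) (d : X -> X -> R)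
  (HCAT : CAT0 X d) (Hcomplete : complete X d)
  (T : nat -> X -> X)
  (phi : R -> R)
  (Hphi_nonneg : forall t, 0 <= t -> 0 <= phi t)
  (Hphi_incr : forall s t, 0 <= s -> s <= t -> phi s <= phi t)
  (Hphi_zero : forall t, 0 <= t -> (phi t = 0 <-> t = 0))
  (gamma : nat -> R) (Hgamma_pos : forall n, 0 < gamma n)
  (theta : nat -> nat) (Htheta : rate_of_divergence gamma theta)
  (b : nat) (p : X) (HpF : forall n, T n p = p)
  (HP2 : forall n, uniformly_P2 X d (T n) (closed_ball X d p (INR b))
                     (fun u => gamma n * phi u))
  (x : X) (HxC : closed_ball X d p (INR b) x)
  (Hnoninc : forall n,
     d (iter_seq T x (S n)) (iter_seq T x (S (S n))) / gamma (S n) <=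
     d (iter_seq T x n) (iter_seq T x (S n)) / gamma n) :
  (forall y, closed_ball X d p (INR b) y -> ((forall n, T n y = y) <-> y = p)) /\
  seq_converges_to X d (iter_seq T x) p /\
  rate_of_convergence X d (iter_seq T x) p (Psi_rate b theta phi).
Proof.
  destruct HCAT as [Hmetric _].
  pose proof Hmetric as [Hd0 [_ [Hsym Htri]]].
  set (C := closed_ball X d p (INR b)).
  assert (HpC : C p) by (apply closed_ball_center; [exact Hmetric | apply pos_INR]).
  assert (HxsC : forall n, C (iter_seq T x n))
    by (apply iter_seq_in; [intros n; apply (HP2 n) | exact HxC]).
  assert (Hrate : rate_of_convergence X d (iter_seq T x) p (Psi_rate b theta phi)).
  { intros k n.
    apply (Psi_rate_bound (fun n => d (iter_seq T x n) p)
             (fun n => d (iter_seq T x n) (iter_seq T x (S n))) gamma phi (INR b));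
      auto; try (intro; apply Hd0).
    - intro m. rewrite Hsym. apply HxsC.
    - intro m. exact (P2_fixed_point_descent X d Hmetric _ _ _ p (HP2 m) HpC (HpF m) _ (HxsC m)).
    - apply Rle_refl.
    - intros t Ht. apply Hphi_zero, Ht. }
  split; [|split; [apply rate_of_convergence_converges with (1 := Hrate) | exact Hrate]].
  intros y Hy. split; [|intros ->; exact HpF].
  intro Hfix.
  apply (P2_fixed_point_unique X d Hmetric _ _ _ p (HP2 0%nat) HpC (HpF 0%nat)); auto.
  intros t Ht Hpsi. apply Hphi_zero; [exact Ht|].
  pose proof (Hgamma_pos 0%nat). pose proof (Hphi_nonneg t Ht). nra.
Qed.
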